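(* Let $T$ be a non-abelian finite simple group, $s\in\pi(T)$, $E$ a perfect central extension of $T$ with $Z(E)$ of order coprime to $s$, and $S$ a (possibly trivial) $s$-group. Let $G$ be a finite perfect group having a central subgroup $Z$ of order coprime to $s$ such that $G/Z$ has a normal subgroup isomorphic to $S$ with corresponding quotient isomorphic to $E$. Assume that no subgroup of $G$ having $E$ as a section contains a central element of order $s$. Then there is a subgroup $H\le G$ with a normal $s$-subgroup $\hat S$ such that $H/\hat S\cong\hat E$ for a perfect central extension $\hat E$ of $T$ having $E$ as a section.
   Context: All groups are finite. A perfect central extension of $T$ is a perfect group $E$ with $E/Z(E)\cong T$. A section of a group is a quotient of a subgroup. *)

From mathcomp Require Import all_boot all_fingroup all_solvable.
Set Implicit Arguments.
Unset Strict Implicit.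
Unset Printing Implicit Defensive.
Local Open Scope group_scope.

Definition perfect (gT : finGroupType) (G : {set gT}) : Prop := G^`(1) = G.

Definition perfect_central_ext (eT tT : finGroupType)
  (E : {group eT}) (T : {group tT}) : Prop :=
  perfect E /\ (E / 'Z(E)) \isog T.

Definition is_section_of (gT eT : finGroupType) (E : {group eT}) (K : {set gT}) : Prop :=
  exists (A B : {group gT}), [/\ A \subset K, B <| A & (A / B) \isog E].

(** Let M be the preimage in G of the normal s-subgroup of G/Z and put P = O_s(M).
    Since Z is central and M/Z is an s-group, M is nilpotent and its Hall s'-part
    lies in Z; hence M/P is central in the perfect group G/P, with quotient E.
    Centrality gives Z(G/P)/(M/P) = Z((G/P)/(M/P)) (a three subgroups argument),
    so (G/P)/Z(G/P) is T and G/P itself is a perfect central extension of T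
    having E as a section.  Thus H = G and S^ = P work. *)

From mathcomp Require Import all_boot all_fingroup all_solvable.

Set Implicit Arguments.
Unset Strict Implicit.
Unset Printing Implicit Defensive.

Local Open Scope group_scope.

Lemma isog_quotient_center (aT rT : finGroupType) (A : {group aT}) (B : {group rT}) :
  A \isog B -> A / 'Z(A) \isog B / 'Z(B).
Proof.
case/isogP=> f injf fA.
have fZ : f @* 'Z(A) = 'Z(B) by rewrite injm_center // fA.
suff: A / 'Z(A) \isog f @* A / f @* 'Z(A) by rewrite fZ fA.
apply/isogP; exists (quotm_morphism f (center_normal A)); first exact: injm_quotm.
by rewrite morphim_quotm.
Qed.

Section CentralQuotients.

Variable gT : finGroupType.
Implicit Types G M X Y Z : {group gT}.

Lemma perfect_quotient X Y : perfect X -> X \subset 'N(Y) -> perfect (X / Y).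
Proof. by move=> pX nYX; rewrite /perfect -quotient_der // pX. Qed.

(* The preimage C of Z(X/Y) satisfies [C, X, X] = [X, C, X] = 1, so the three
   subgroups lemma kills [X, X, C] = [X, C] in the perfect group X. *)
Lemma center_quotient_central X Y :
  perfect X -> Y \subset 'Z(X) -> 'Z(X / Y) = 'Z(X) / Y.
Proof.
move=> pX sYZ; have nsYX := sub_center_normal sYZ; have nYX := normal_norm nsYX.
have cYX : Y \subset 'C(X) := subset_trans sYZ (subsetIr _ _).
set C := coset Y @*^-1 'Z(X / Y).
have sCX : C \subset X by rewrite sub_cosetpre_quo ?center_sub.
have sCXY : [~: C, X] \subset Y.
  rewrite -quotient_sub1 ?(subset_trans (comm_subG sCX _) nYX) //.
  rewrite quotientR ?(subset_trans sCX) // cosetpreK subG1.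
  by apply/eqP/commG1P/subsetIr.
have cXC : [~: X, C] = 1.
  have cXCX : [~: X, C, X] = 1.
    by apply/commG1P; rewrite commGC; apply: subset_trans cYX.
  have cCXX : [~: C, X, X] = 1 by apply/commG1P; apply: subset_trans cYX.
  by rewrite -{1}pX -(three_subgroup cXCX cCXX).
have sCZ : C \subset 'Z(X) by rewrite subsetI sCX centsC; apply/commG1P.
apply/eqP; rewrite eqEsubset morphim_center andbT.
by rewrite -{1}(cosetpreK 'Z(X / Y)) quotientS.
Qed.

Lemma nilpotent_central_quotient M Z :
  Z \subset 'Z(M) -> nilpotent (M / Z) -> nilpotent M.
Proof.
move=> cZM nilMZ; have nsZM := sub_center_normal cZM.
rewrite -quotient_center_nil -(isog_nil (third_isog cZM nsZM (center_normal M))).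
exact: quotient_nil.
Qed.

Lemma pcoreC_sub_pquotient pi M Z :
  M \subset 'N(Z) -> pi.-group (M / Z) -> 'O_pi^'(M) \subset Z.
Proof.
move=> nZM pMZ; set Q := 'O_pi^'(M).
have nZQ : Q \subset 'N(Z) := subset_trans (pcore_sub _ _) nZM.
have pQZ : pi.-group (Q / Z) by apply: pgroupS pMZ; rewrite quotientS ?pcore_sub.
have p'QZ : pi^'.-group (Q / Z) by rewrite quotient_pgroup ?pcore_pgroup.
by rewrite -quotient_sub1 // subG1 trivg_card1 (pnat_1 pQZ p'QZ).
Qed.

(* M = O_p(M) x O_p'(M) by nilpotency, and O_p'(M) lies in the central Z. *)
Lemma quotient_pcore_central (p : nat) G M Z :
  Z \subset 'Z(G) -> Z \subset M -> M \subset G -> p.-group (M / Z) ->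
  M / 'O_p(M) \subset 'Z(G / 'O_p(M)).
Proof.
move=> cZG sZM sMG pMZ.
have cZM : Z \subset 'Z(M).
  rewrite subsetI sZM; apply: subset_trans cZG _.
  exact: subset_trans (subsetIr _ _) (centS sMG).
have nilM : nilpotent M.
  exact: nilpotent_central_quotient cZM (pgroup_nil pMZ).
have sQZ : 'O_p^'(M) \subset Z.
  by apply: pcoreC_sub_pquotient pMZ; rewrite normal_norm ?sub_center_normal.
have defM := dprodW (nilpotent_pcoreC p nilM).
set P := 'O_p(M) in defM *.
rewrite -{1}defM quotientMidl.
exact: subset_trans (quotientS _ (subset_trans sQZ cZG)) (morphim_center _ _).
Qed.

Lemma perfect_central_ext_lift (eT tT : finGroupType) X Y
    (E : {group eT}) (T : {group tT}) :
  perfect X -> Y \subset 'Z(X) -> X / Y \isog E -> perfect_central_ext E T ->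
  perfect_central_ext X T.
Proof.
move=> pX cYX isoE [_ isoT]; split=> //.
have isoXY : X / 'Z(X) \isog X / Y / 'Z(X / Y).
  rewrite center_quotient_central // isog_sym.
  exact: third_isog cYX (sub_center_normal cYX) (center_normal X).
exact: isog_trans isoXY (isog_trans (isog_quotient_center isoE) isoT).
Qed.

End CentralQuotients.

Theorem lemma1p16
  (tT eT sT gT : finGroupType)
  (T : {group tT}) (s : nat) (E : {group eT}) (S : {group sT})
  (G : {group gT}) (Z : {group gT})
  (simT : simple T) (nabT : ~~ abelian T) (sT_pi : s \in \pi(T))
  (extE : perfect_central_ext E T) (copZE : coprime #|'Z(E)| s)
  (sgS : s.-group S)
  (perfG : perfect G) (cZG : Z \subset 'Z(G)) (copZ : coprime #|Z| s)
  (quo : exists N : {group coset_of Z},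
           [/\ N <| G / Z, N \isog S & (G / Z) / N \isog E])
  (noc : forall K : {group gT}, K \subset G -> is_section_of E K ->
           ~ (exists z, z \in 'Z(K) /\ #[z] = s)) :
  exists (H Sh : {group gT}) (hT : finGroupType) (Eh : {group hT}),
    [/\ H \subset G, Sh <| H & s.-group Sh] /\
    [/\ (H / Sh) \isog Eh, perfect_central_ext Eh T & is_section_of E Eh].
Proof.
have nsZG := sub_center_normal cZG.
case: quo => N [nsNG isoNS isoE].
have [M defN sZM nsMG] := inv_quotientN nsZG nsNG.
have sMG := normal_sub nsMG.
have pMZ : s.-group (M / Z) by rewrite -defN (isog_pgroup _ isoNS).
set P := 'O_s(M)%G.
have nsPG : P <| G := char_normal_trans (pcore_char _ _) nsMG.
have isoGPE : G / P / (M / P) \isog E.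
  apply: isog_trans (third_isog (pcore_sub _ _) nsPG nsMG) _.
  rewrite defN in isoE.
  exact: isog_trans (isog_symr (third_isog sZM nsZG nsMG)) isoE.
have cMPG := quotient_pcore_central cZG sZM sMG pMZ.
exists G, P, _, (G / P)%G; split; first by split=> //; apply: pcore_pgroup.
split.
- exact: isog_refl.
- apply: perfect_central_ext_lift isoGPE extE => //.
  exact: perfect_quotient perfG (normal_norm nsPG).
- by exists (G / P)%G, (M / P)%G; rewrite quotient_normal.
Qed.
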